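(* Let $p,n\ge1$ and let $u_j,v_j\in E^p$ for $j=1,\dots,n$. Put $u=\sum_{j=1}^n u_j$ and $v=\sum_{j=1}^n v_j$. Then $$D(u,v)\le\sum_{j=1}^n D(u_j,v_j).$$
   Context: A fuzzy subset of $\mathbb{R}^p$ is a function $u:\mathbb{R}^p\to[0,1]$. Its $\alpha$-cut is $[u]_\alpha=\{x\in\mathbb{R}^p: u(x)\ge\alpha\}$ for $\alpha\in(0,1]$, and $[u]_0=\overline{\{x\in\mathbb{R}^p: u(x)>0\}}$. The set $E^p$ of $p$-dimensional fuzzy numbers consists of all fuzzy subsets $u$ of $\mathbb{R}^p$ such that $[u]_\alpha$ is a nonempty compact convex subset of $\mathbb{R}^p$ for every $\alpha\in[0,1]$. For $u,v\in E^p$, $u+v$ is the element of $E^p$ determined by $[u+v]_\alpha=\{x+y: x\in[u]_\alpha,\ y\in[v]_\alpha\}$ for all $\alpha\in[0,1]$. The sendograph of $u\in E^p$ is $\mathrm{send}\,u=\{(x,\alpha)\in[u]_0\times[0,1]: u(x)\ge\alpha\}\subset\mathbb{R}^{p+1}$. For nonempty compact $U,V\subset\mathbb{R}^{p+1}$ (with the Euclidean metric $d$), the Hausdorff metric is $H(U,V)=\max\{H^*(U,V),H^*(V,U)\}$ with $H^*(U,V)=\sup_{a\in U}\inf_{b\in V}d(a,b)$. The sendograph metric on $E^p$ is $D(u,v)=H(\mathrm{send}\,u,\mathrm{send}\,v)$. *)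

(* Points of R^p are row vectors 'rV[R]_p,
   with the library topology (equivalent to the Euclidean one). *)
From HB Require Import structures.
From mathcomp Require Import all_boot all_order all_algebra.
From mathcomp Require Import all_classical all_reals all_analysis.
Set Implicit Arguments. Unset Strict Implicit. Unset Printing Implicit Defensive.
Import Order.TTheory GRing.Theory Num.Theory.
Import numFieldNormedType.Exports.
Local Open Scope classical_set_scope.
Local Open Scope ring_scope.

Section Fuzzy.
Variables (R : realType) (p : nat).

(* a fuzzy subset of R^p : a function R^p -> [0,1] (range condition in fuzzy_number) *)
Definition fuzzy := 'rV[R]_p -> R.

Definition acut (u : fuzzy) (a : R) : set 'rV[R]_p :=
  if 0 < a then [set x | a <= u x] else closure [set x | 0 < u x].

Definition convex_set (S : set 'rV[R]_p) : Prop :=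
  forall x y t, S x -> S y -> 0 <= t <= 1 -> S (t *: x + (1 - t) *: y).

Definition fuzzy_number (u : fuzzy) : Prop :=
  (forall x, 0 <= u x <= 1) /\
  forall a, 0 <= a <= 1 ->
    acut u a !=set0 /\ compact (acut u a) /\ convex_set (acut u a).

Definition minkowski_sum n (S : 'I_n -> set 'rV[R]_p) : set 'rV[R]_p :=
  [set z | exists xs : 'I_n -> 'rV[R]_p, (forall j, S j (xs j)) /\ z = \sum_(j < n) xs j].

Definition is_fuzzy_sum n (us : 'I_n -> fuzzy) (u : fuzzy) : Prop :=
  fuzzy_number u /\
  forall a, 0 <= a <= 1 -> acut u a = minkowski_sum (fun j => acut (us j) a).

Definition send (u : fuzzy) : set ('rV[R]_p * R) :=
  [set xa | acut u 0 xa.1 /\ 0 <= xa.2 <= 1 /\ xa.2 <= u xa.1].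

Definition edist (a b : 'rV[R]_p * R) : R :=
  Num.sqrt (\sum_(i < p) (a.1 0 i - b.1 0 i) ^+ 2 + (a.2 - b.2) ^+ 2).

Definition hausdorff_star (U V : set ('rV[R]_p * R)) : R :=
  sup [set r | exists2 a, U a & r = inf [set s | exists2 b, V b & s = edist a b]].

Definition hausdorff (U V : set ('rV[R]_p * R)) : R :=
  Num.max (hausdorff_star U V) (hausdorff_star V U).

Definition send_dist (u v : fuzzy) : R := hausdorff (send u) (send v).

End Fuzzy.

(* A point (x, a) of send u is (sum_j x_j, a) with (x_j, a) in send u_j.  Pick
   points (y_j, b_j) of send v_j nearly closest to (x_j, a) and let b be the least
   b_j: since cuts shrink as the level grows, (sum_j y_j, b) lies in send v.  As
   |a - b| <= sum_j |a - b_j|, the triangle inequality for the Euclidean norm of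
   R^(p+1) bounds its distance to (x, a) by sum_j d((x_j, a), (y_j, b_j)).  Hence
   H*(send u, send v) <= sum_j H*(send u_j, send v_j), and symmetrically. *)

From Pilot Require Import Defs.
From HB Require Import structures.
From mathcomp Require Import all_boot all_order all_algebra.
From mathcomp Require Import all_classical all_reals all_analysis.
From mathcomp Require Import ring lra.
Set Implicit Arguments.
Unset Strict Implicit.
Unset Printing Implicit Defensive.
Import Order.TTheory GRing.Theory Num.Theory.
Local Open Scope classical_set_scope.
Local Open Scope ring_scope.

Section EuclideanNorm.
Variables (R : realType) (I : finType).
Implicit Types f g : I -> R.

Definition l2norm f : R := Num.sqrt (\sum_i f i ^+ 2).

Lemma sum_sqr_ge0 f : 0 <= \sum_i f i ^+ 2.
Proof. by apply: sumr_ge0 => i _; rewrite sqr_ge0. Qed.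

Lemma l2norm_ge0 f : 0 <= l2norm f.
Proof. exact: sqrtr_ge0. Qed.

Lemma l2normK f : l2norm f ^+ 2 = \sum_i f i ^+ 2.
Proof. by rewrite sqr_sqrtr // sum_sqr_ge0. Qed.

Lemma l2norm_eq0 f : l2norm f = 0 -> f =1 (fun=> 0).
Proof.
move=> /eqP; rewrite sqrtr_eq0 => le0 i; apply/eqP; rewrite -sqrf_eq0.
have /psumr_eq0P-> // : \sum_i f i ^+ 2 = 0.
  by apply/eqP; rewrite eq_le le0 sum_sqr_ge0.
by move=> j _; rewrite sqr_ge0.
Qed.

Lemma l2norm_CauchySchwarz f g : \sum_i f i * g i <= l2norm f * l2norm g.
Proof.
set A := l2norm f; set B := l2norm g.
have [A0|] := eqVneq A 0.
  by rewrite A0 mul0r big1 // => i _; rewrite (l2norm_eq0 A0) mul0r.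
have [B0 _|nzB nzA] := eqVneq B 0.
  by rewrite B0 mulr0 big1 // => i _; rewrite (l2norm_eq0 B0) mulr0.
have AB_gt0 : 0 < A * B by rewrite mulr_gt0 // lt_def ?nzA ?nzB l2norm_ge0.
have : 0 <= \sum_i (B * f i - A * g i) ^+ 2 by apply: sum_sqr_ge0.
have -> : \sum_i (B * f i - A * g i) ^+ 2 =
    B ^+ 2 * \sum_i f i ^+ 2 + A ^+ 2 * \sum_i g i ^+ 2
    - 2 * (A * B) * \sum_i f i * g i.
  rewrite !mulr_sumr -big_split -sumrB /=.
  by apply: eq_bigr => i _; ring.
rewrite -!l2normK -/A -/B subr_ge0 => h.
have two_AB_gt0 : 0 < 2 * (A * B) by rewrite mulr_gt0.
rewrite -(ler_pM2l two_AB_gt0); apply: (le_trans h).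
by rewrite le_eqVlt; apply/orP; left; apply/eqP; ring.
Qed.

Lemma l2normD f g : l2norm (f \+ g) <= l2norm f + l2norm g.
Proof.
rewrite -[X in _ <= X]ger0_norm ?addr_ge0 ?l2norm_ge0 // -sqrtr_sqr.
rewrite ler_wsqrtr // sqrrD !l2normK.
under eq_bigr do rewrite sqrrD.
have := l2norm_CauchySchwarz f g.
rewrite !big_split /= mulr2n; lra.
Qed.

Lemma l2norm_sum (J : Type) (r : seq J) (F : J -> I -> R) :
  l2norm (fun i => \sum_(j <- r) F j i) <= \sum_(j <- r) l2norm (F j).
Proof.
elim: r => [|j r IHr].
  by rewrite big_nil /l2norm big1 ?sqrtr0 // => i _; rewrite big_nil expr0n.
rewrite big_cons; under eq_fun do rewrite big_cons.
by apply: le_trans (l2normD _ _) _; rewrite lerD2l.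
Qed.

Lemma l2norm_le f g : (forall i, `|f i| <= `|g i|) -> l2norm f <= l2norm g.
Proof.
move=> fg; apply/ler_wsqrtr/ler_sum => i _.
rewrite -[f i ^+ 2]real_normK ?num_real // -[g i ^+ 2]real_normK ?num_real //.
by rewrite lerXn2r ?nnegrE.
Qed.

End EuclideanNorm.

Lemma ler_mx_entry_norm {R : realDomainType} {m n : nat} (x : 'M[R]_(m, n)) i j :
  `|x i j| <= `|x|.
Proof. by rewrite [X in _ <= X]/Num.norm /= mx_normrE (le_bigmax _ _ (i, j)). Qed.

Section Sendograph.
Variables (R : realType) (p : nat).
Implicit Types (w : fuzzy R p) (a b : 'rV[R]_p * R).

Definition coord a : 'I_p + 'I_1 -> R :=
  fun i => if i is inl k then a.1 0 k else a.2.

Lemma edistE a b : Defs.edist a b = l2norm (fun i => coord a i - coord b i).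
Proof. by rewrite /Defs.edist /l2norm big_sumType big_ord1. Qed.

Lemma edist_sum_le n (xs : 'I_n -> 'rV[R]_p) c (bs : 'I_n -> 'rV[R]_p * R) d :
  `|c - d| <= \sum_j `|c - (bs j).2| ->
  Defs.edist (\sum_j xs j, c) (\sum_j (bs j).1, d) <=
    \sum_j Defs.edist (xs j, c) (bs j).
Proof.
move=> cd; rewrite edistE (eq_bigr _ (fun j _ => edistE _ _)).
set e := fun j i => coord (xs j, c) i - coord (bs j) i.
apply: (@le_trans _ _ (l2norm (fun i => \sum_j `|e j i|))).
  apply: l2norm_le => i; rewrite [X in _ <= X]ger0_norm ?sumr_ge0 // /e.
  by case: i => [k|i] //=; rewrite !summxE -sumrB ler_norm_sum.
apply: le_trans (l2norm_sum _ (fun j i => `|e j i|)) _.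
by apply: ler_sum => j _; apply: l2norm_le => i; rewrite normr_id.
Qed.

Lemma acut_le w (b b' : R) : b <= b' -> acut w b' `<=` acut w b.
Proof.
rewrite /acut => bb' x; case: ifP => b'_gt0; case: ifP => b_gt0 //.
- exact: le_trans.
- by move=> b'x; apply: subset_closure; rewrite /= (lt_le_trans b'_gt0).
- by rewrite (lt_le_trans b_gt0 bb') in b'_gt0.
Qed.

Lemma fuzzy_number_ge0 w : fuzzy_number w -> forall x, 0 <= w x.
Proof. by case=> w01 _ x; case/andP: (w01 x). Qed.

(* At level [0] the bound [a <= w x] required by [send] comes from [w >= 0]. *)
Lemma sendP w x (a : R) : (forall x, 0 <= w x) ->
  send w (x, a) <-> 0 <= a <= 1 /\ acut w a x.
Proof.
rewrite /send /acut /= ltxx => w_ge0; split.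
  by case=> w0x [a01 aw]; split => //; case: ifP.
case=> /andP[a0 a1]; case: ifP => [a_gt0 aw|a_le0 w0x].
  by split; [apply: subset_closure; rewrite /= (lt_le_trans a_gt0)|rewrite a0 a1].
split; rewrite ?a0 ?a1 //; split => //.
by apply: le_trans (w_ge0 x); rewrite leNgt a_le0.
Qed.

Lemma send_neq0 w : fuzzy_number w -> send w !=set0.
Proof.
move=> wE; have [_ /(_ 0)] := wE; rewrite lexx ler01 => /(_ isT) [[x w0x] _].
by exists (x, 0); apply/(sendP _ _ (fuzzy_number_ge0 wE)); rewrite lexx ler01.
Qed.

Lemma send_coord_bounded w : fuzzy_number w ->
  exists B, forall a, send w a -> forall i, `|coord a i| <= B.
Proof.
move=> wE; have [_ /(_ 0)] := wE; rewrite lexx ler01 => /(_ isT) [_ [cpt_w0 _]].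
have [M [_ bndM]] := compact_bounded cpt_w0.
exists (Num.max (M + 1) 1) => -[x a] /(sendP _ _ (fuzzy_number_ge0 wE)).
case=> /andP[a0 a1] wax [k|i] /=; rewrite le_max.
  apply/orP; left; apply: le_trans (ler_mx_entry_norm x 0 k) _.
  by apply: (bndM (M + 1)); [rewrite ltrDl | apply: acut_le wax].
by rewrite ger0_norm ?a1 ?orbT.
Qed.

Definition set_dist a (V : set ('rV[R]_p * R)) : R :=
  inf [set s | exists2 b, V b & s = Defs.edist a b].

Lemma set_dist_le a V b : V b -> set_dist a V <= Defs.edist a b.
Proof.
move=> Vb; apply: ge_inf; last by exists b.
by exists 0 => _ [c _ ->]; apply: sqrtr_ge0.
Qed.

Lemma set_dist_approx a V e : V !=set0 -> 0 < e ->
  exists2 b, V b & Defs.edist a b < set_dist a V + e.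
Proof.
move=> [b0 Vb0] e_gt0; have : set_dist a V < set_dist a V + e by rewrite ltrDl.
by case/inf_lt => [|_ [b Vb ->]]; [exists (Defs.edist a b0), b0 | exists b].
Qed.

Lemma set_dist_ubound U V : V !=set0 ->
    (exists B, forall a, U a -> forall i, `|coord a i| <= B) ->
  has_ubound [set r | exists2 a, U a & r = set_dist a V].
Proof.
move=> [b0 Vb0] [B coordB].
exists (l2norm (fun _ : 'I_p + 'I_1 => B) + l2norm (fun i => - coord b0 i)).
move=> _ [a Ua ->].
apply: le_trans (set_dist_le _ Vb0) _; rewrite edistE.
apply: le_trans (l2normD (coord a) (fun i => - coord b0 i)) _; rewrite lerD2r.
by apply: l2norm_le => i; apply: le_trans (coordB a Ua i) (ler_norm _).
Qed.

Lemma hausdorff_star_ge U V a :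
    has_ubound [set r | exists2 a, U a & r = set_dist a V] ->
  U a -> set_dist a V <= hausdorff_star U V.
Proof. by move=> ubU Ua; apply: (ub_le_sup ubU); exists a. Qed.

Lemma hausdorff_star_le U V c : U !=set0 ->
  (forall a, U a -> set_dist a V <= c) -> hausdorff_star U V <= c.
Proof.
move=> [a0 Ua0] le_c; apply: ge_sup; first by exists (set_dist a0 V), a0.
by move=> _ [a Ua ->]; apply: le_c.
Qed.

Lemma send_sum_min_level n (vs : 'I_n -> fuzzy R p) v (bs : 'I_n -> 'rV[R]_p * R) k :
    (forall j, fuzzy_number (vs j)) -> is_fuzzy_sum vs v ->
    (forall j, send (vs j) (bs j)) -> (forall j, (bs k).2 <= (bs j).2) ->
  send v (\sum_j (bs j).1, (bs k).2).
Proof.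
move=> vsE [vE v_cuts] bs_send bk_min.
have bs_cut j : 0 <= (bs j).2 <= 1 /\ acut (vs j) (bs j).2 (bs j).1.
  by move: (bs_send j); case: (bs j) => x a /(sendP _ _ (fuzzy_number_ge0 (vsE j))).
have [/andP[bk0 bk1] _] := bs_cut k.
apply/(sendP _ _ (fuzzy_number_ge0 vE)); split; first by rewrite bk0 bk1.
rewrite v_cuts ?bk0 ?bk1 //; exists (fun j => (bs j).1); split => // j.
by have [_ /(acut_le (bk_min j))] := bs_cut j.
Qed.

Lemma hausdorff_star_send_sum n (us vs : 'I_n -> fuzzy R p) u v : (0 < n)%N ->
    (forall j, fuzzy_number (us j)) -> (forall j, fuzzy_number (vs j)) ->
    is_fuzzy_sum us u -> is_fuzzy_sum vs v ->
  hausdorff_star (send u) (send v) <=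
    \sum_j hausdorff_star (send (us j)) (send (vs j)).
Proof.
move=> n_gt0 usE vsE [uE u_cuts] vF.
apply: hausdorff_star_le (send_neq0 uE) _ => -[x a].
move=> /(sendP _ _ (fuzzy_number_ge0 uE)) [a01 ux].
rewrite u_cuts // in ux; case: ux => xs [xs_cut ->].
apply/ler_addgt0Pr => e e_gt0.
have en_gt0 : 0 < e / n%:R by rewrite divr_gt0 // ltr0n.
have /choice[bs bs_near] j : exists b, send (vs j) b /\
    Defs.edist (xs j, a) b < set_dist (xs j, a) (send (vs j)) + e / n%:R.
  by have [b] := set_dist_approx (xs j, a) (send_neq0 (vsE j)) en_gt0; exists b.
have [k _ bk_min] := arg_minP (fun j => (bs j).2) (isT : xpredT (Ordinal n_gt0)).
have bs_send j := (bs_near j).1.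
have := send_sum_min_level vsE vF bs_send (fun j => bk_min j isT).
move=> /(set_dist_le (\sum_j xs j, a)) /le_trans; apply.
have level_k : `|a - (bs k).2| <= \sum_j `|a - (bs j).2|.
  by rewrite [X in _ <= X](bigD1 k) //= lerDl sumr_ge0.
apply: le_trans (edist_sum_le xs level_k) _.
apply: le_trans (ler_sum _ (fun j _ => ltW (bs_near j).2)) _.
rewrite big_split /= sumr_const card_ord.
have -> : e / n%:R *+ n = e by rewrite -mulr_natr divfK // pnatr_eq0 -lt0n.
rewrite lerD2r; apply: ler_sum => j _.
have ub := set_dist_ubound (send_neq0 (vsE j)) (send_coord_bounded (usE j)).
apply: hausdorff_star_ge ub _.
exact/(sendP _ _ (fuzzy_number_ge0 (usE j))).
Qed.

End Sendograph.

Theorem theorem2p4 (R : realType) (p n : nat) (hp : (0 < p)%N) (hn : (0 < n)%N)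
  (us vs : 'I_n -> fuzzy R p) (u v : fuzzy R p)
  (hus : forall j, fuzzy_number (us j)) (hvs : forall j, fuzzy_number (vs j))
  (hu : is_fuzzy_sum us u) (hv : is_fuzzy_sum vs v) :
  send_dist u v <= \sum_(j < n) send_dist (us j) (vs j).
Proof.
rewrite /send_dist /hausdorff ge_max; apply/andP; split.
  apply: le_trans (hausdorff_star_send_sum hn hus hvs hu hv) _.
  by apply: ler_sum => j _; rewrite le_max lexx.
apply: le_trans (hausdorff_star_send_sum hn hvs hus hv hu) _.
by apply: ler_sum => j _; rewrite le_max lexx orbT.
Qed.
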